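(* Let $(x_n)\in\ell_1$ and let $I$ be a maximal ideal on $\mathbb{N}$. If $A(x_n)$ is nonmeager in $\mathbb{R}$, then $A_I(x_n)$ is nonmeager. If $\lambda^{*}(A(x_n))>0$ and $A_I(x_n)$ is Lebesgue measurable, then $\lambda^{*}(A_I(x_n))>0$, where $\lambda^{*}$ is Lebesgue outer measure.
   Context: An ideal on $\mathbb{N}$ is a family $I\subseteq P(\mathbb{N})$ closed under finite unions and subsets with $\mathbb{N}\notin I$; it is maximal if for every $A\subseteq\mathbb{N}$ either $A\in I$ or $\mathbb{N}\setminus A\in I$. $A(x_n)=\{\sum_{n\in A}x_n : A\subseteq\mathbb{N}\}$, $A_I(x_n)=\{\sum_{n\in A}x_n : A\in I\}$. *)

From Stdlib Require Import Reals Classical ClassicalEpsilon.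
Open Scope R_scope.

Definition ell1 (x : nat -> R) : Prop :=
  exists l, infinite_sum (fun n => Rabs (x n)) l.

Definition is_subsum (x : nat -> R) (A : nat -> Prop) (s : R) : Prop :=
  exists y : nat -> R,
    (forall n, (A n -> y n = x n) /\ (~ A n -> y n = 0)) /\
    infinite_sum y s.

Definition achievement (x : nat -> R) : R -> Prop :=
  fun s => exists A : nat -> Prop, is_subsum x A s.

Definition achievement_I (x : nat -> R) (I : (nat -> Prop) -> Prop) : R -> Prop :=
  fun s => exists A : nat -> Prop, I A /\ is_subsum x A s.

Definition is_ideal (I : (nat -> Prop) -> Prop) : Prop :=
  (forall A B, I A -> I B -> I (fun n => A n \/ B n)) /\
  (forall A B, I B -> (forall n, A n -> B n) -> I A) /\
  ~ I (fun _ => True).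

Definition maximal_ideal (I : (nat -> Prop) -> Prop) : Prop :=
  is_ideal I /\ forall A : nat -> Prop, I A \/ I (fun n => ~ A n).

Definition closureR (S : R -> Prop) : R -> Prop :=
  fun x => forall eps, 0 < eps -> exists y, S y /\ Rabs (x - y) < eps.

Definition nowhere_dense (S : R -> Prop) : Prop :=
  ~ exists x eps, 0 < eps /\
      forall y, Rabs (y - x) < eps -> closureR S y.

Definition meager (S : R -> Prop) : Prop :=
  exists N : nat -> R -> Prop,
    (forall k, nowhere_dense (N k)) /\
    (forall x, S x -> exists k, N k x).

Inductive Rbar : Type := Finite (r : R) | p_infty.

Definition Rbar_plus (a b : Rbar) : Rbar :=
  match a, b with
  | Finite r, Finite s => Finite (r + s)
  | _, _ => p_infty
  end.

Definition Rbar_lt (a b : Rbar) : Prop :=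
  match a, b with
  | Finite r, Finite s => r < s
  | Finite _, p_infty => True
  | p_infty, _ => False
  end.

Definition cover_lengths (S : R -> Prop) : R -> Prop :=
  fun L => exists a b : nat -> R,
    (forall k, a k <= b k) /\
    (forall x, S x -> exists k, a k < x < b k) /\
    infinite_sum (fun k => b k - a k) L.

Definition is_glb (E : R -> Prop) (m : R) : Prop :=
  (forall x, E x -> m <= x) /\
  (forall m', (forall x, E x -> m' <= x) -> m' <= m).

Definition lebesgue_outer (S : R -> Prop) : Rbar :=
  match excluded_middle_informative (exists L, cover_lengths S L) with
  | left _ => Finite (epsilon (inhabits 0) (is_glb (cover_lengths S)))
  | right _ => p_infty
  end.

Definition lebesgue_measurable (S : R -> Prop) : Prop :=
  forall T : R -> Prop,
    lebesgue_outer T =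
    Rbar_plus (lebesgue_outer (fun x => T x /\ S x))
              (lebesgue_outer (fun x => T x /\ ~ S x)).

(* For A ⊆ ℕ with sum s, the complement has sum σ - s, where σ = Σ x_n.
   A maximal ideal contains A or its complement, so A(x_n) ⊆ A_I(x_n) ∪ (σ - A_I(x_n)).
   Meagerness and outer-measure nullity pass to such a union of a set and its reflection,
   since nowhere dense sets and interval covers are preserved by t ↦ σ - t. *)

From Stdlib Require Import Reals Classical ClassicalEpsilon Lia Lra.
Open Scope R_scope.

Definition interleave {A : Type} (f g : nat -> A) (n : nat) : A :=
  if Nat.even n then f (Nat.div2 n) else g (Nat.div2 n).

Lemma interleave_even {A : Type} (f g : nat -> A) k : interleave f g (2 * k) = f k.
Proof. unfold interleave. now rewrite Nat.even_even, Nat.div2_double. Qed.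

Lemma interleave_odd {A : Type} (f g : nat -> A) k : interleave f g (2 * k + 1) = g k.
Proof. unfold interleave. now rewrite Nat.even_odd, Nat.div2_odd'. Qed.

Lemma sum_interleave_odd (f g : nat -> R) k :
  sum_f_R0 (interleave f g) (2 * k + 1) = sum_f_R0 f k + sum_f_R0 g k.
Proof.
  induction k as [|k IH].
  - cbn. ring.
  - replace (2 * S k + 1)%nat with (S (S (2 * k + 1))) by lia.
    cbn [sum_f_R0]. rewrite IH.
    replace (S (2 * k + 1)) with (2 * S k)%nat by lia.
    replace (S (2 * S k)) with (2 * S k + 1)%nat by lia.
    rewrite interleave_even, interleave_odd. ring.
Qed.

Lemma sum_interleave_even (f g : nat -> R) k :
  sum_f_R0 (interleave f g) (2 * S k) = sum_f_R0 f (S k) + sum_f_R0 g k.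
Proof.
  replace (2 * S k)%nat with (S (2 * k + 1)) at 1 by lia.
  cbn [sum_f_R0]. rewrite sum_interleave_odd.
  replace (S (2 * k + 1)) with (2 * S k)%nat by lia.
  rewrite interleave_even. ring.
Qed.

Lemma infinite_sum_interleave (f g : nat -> R) L M :
  infinite_sum f L -> infinite_sum g M -> infinite_sum (interleave f g) (L + M).
Proof.
  intros Hf Hg eps Heps.
  destruct (Hf (eps / 2)) as [Nf HNf]; [lra|].
  destruct (Hg (eps / 2)) as [Ng HNg]; [lra|].
  exists (2 * (Nf + Ng) + 2)%nat. intros n Hn. unfold Rdist in *.
  assert (split_error : forall i j, (i >= Nf)%nat -> (j >= Ng)%nat ->
            Rabs (sum_f_R0 f i + sum_f_R0 g j - (L + M)) < eps).
  { intros i j Hi Hj.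
    replace (sum_f_R0 f i + sum_f_R0 g j - (L + M))
      with ((sum_f_R0 f i - L) + (sum_f_R0 g j - M)) by ring.
    eapply Rle_lt_trans; [apply Rabs_triang|].
    specialize (HNf i Hi). specialize (HNg j Hj). lra. }
  destruct (Nat.Even_or_Odd n) as [[k ->]|[k ->]].
  - destruct k as [|k]; [lia|].
    rewrite sum_interleave_even. apply split_error; lia.
  - rewrite sum_interleave_odd. apply split_error; lia.
Qed.

Lemma ell1_summable x : ell1 x -> exists s, infinite_sum x s.
Proof.
  intros [l Hl].
  destruct (cv_cauchy_2 x) as [s Hs].
  - apply cauchy_abs, cv_cauchy_1. now exists l.
  - now exists s.
Qed.

Lemma is_subsum_compl x sg A s :
  infinite_sum x sg -> is_subsum x A s -> is_subsum x (fun n => ~ A n) (sg - s).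
Proof.
  intros Hx [y [Hy Hs]]. exists (fun n => x n - y n). split.
  - intro n. destruct (Hy n) as [Hin Hout]. split.
    + intro Hn. rewrite Hout by exact Hn. ring.
    + intro Hn. apply NNPP in Hn. rewrite Hin by exact Hn. ring.
  - intros eps Heps. destruct (CV_minus _ _ _ _ Hx Hs eps Heps) as [N HN].
    exists N. intros n Hn. rewrite minus_sum. exact (HN n Hn).
Qed.

Lemma achievement_sub_achievement_I_reflect x I :
  ell1 x -> maximal_ideal I -> exists sg, forall t,
    achievement x t -> achievement_I x I t \/ achievement_I x I (sg - t).
Proof.
  intros Hx [_ HI]. destruct (ell1_summable x Hx) as [sg Hsg]. exists sg.
  intros t [A HA]. destruct (HI A) as [HA_I|HAc_I].
  - left. now exists A.
  - right. exists (fun n => ~ A n). split; [exact HAc_I|]. now apply is_subsum_compl.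
Qed.

Lemma nowhere_dense_reflect (S : R -> Prop) sg :
  nowhere_dense S -> nowhere_dense (fun y => S (sg - y)).
Proof.
  intros HS [x0 [eps [Heps Hball]]]. apply HS. exists (sg - x0), eps. split; [exact Heps|].
  intros z Hz e He.
  assert (Hz' : Rabs (sg - z - x0) < eps).
  { replace (sg - z - x0) with (- (z - (sg - x0))) by ring. now rewrite Rabs_Ropp. }
  destruct (Hball (sg - z) Hz' e He) as [w [Hw Hwe]].
  exists (sg - w). split; [exact Hw|].
  replace (z - (sg - w)) with (- (sg - z - w)) by ring. now rewrite Rabs_Ropp.
Qed.

Lemma meager_sub_reflect (S T : R -> Prop) sg :
  (forall t, T t -> S t \/ S (sg - t)) -> meager S -> meager T.
Proof.
  intros HT [N [HN Hcov]].
  exists (interleave N (fun k y => N k (sg - y))). split.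
  - intro n. unfold interleave. destruct (Nat.even n).
    + apply HN.
    + apply nowhere_dense_reflect, HN.
  - intros t Ht. destruct (HT t Ht) as [H|H]; destruct (Hcov _ H) as [k Hk].
    + exists (2 * k)%nat. now rewrite interleave_even.
    + exists (2 * k + 1)%nat. now rewrite interleave_odd.
Qed.

Lemma cover_lengths_sub_reflect (S T : R -> Prop) sg L :
  (forall t, T t -> S t \/ S (sg - t)) -> cover_lengths S L -> cover_lengths T (L + L).
Proof.
  intros HT [a [b [Hab [Hcov Hlen]]]].
  exists (interleave a (fun k => sg - b k)), (interleave b (fun k => sg - a k)).
  split; [|split].
  - intro n. unfold interleave. destruct (Nat.even n); specialize (Hab (Nat.div2 n)); lra.
  - intros t Ht. destruct (HT t Ht) as [H|H]; destruct (Hcov _ H) as [k Hk].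
    + exists (2 * k)%nat. now rewrite !interleave_even.
    + exists (2 * k + 1)%nat. rewrite !interleave_odd. lra.
  - assert (Hlen' : infinite_sum (fun k => (sg - a k) - (sg - b k)) L).
    { intros eps Heps. destruct (Hlen eps Heps) as [N HN]. exists N. intros n Hn.
      erewrite sum_eq; [exact (HN n Hn)|]. intros i _. cbv beta. ring. }
    intros eps Heps.
    destruct (infinite_sum_interleave _ _ _ _ Hlen Hlen' eps Heps) as [N HN].
    exists N. intros n Hn. erewrite sum_eq; [exact (HN n Hn)|].
    intros i _. unfold interleave. now destruct (Nat.even i).
Qed.

Lemma cover_lengths_nonneg S L : cover_lengths S L -> 0 <= L.
Proof.
  intros [a [b [Hab [_ Hlen]]]].
  destruct (Rle_or_lt 0 L) as [|HL]; [assumption|].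
  destruct (Hlen (- L)) as [N HN]; [lra|].
  specialize (HN N (le_n _)). unfold Rdist in HN. apply Rabs_def2 in HN.
  assert (0 <= sum_f_R0 (fun k => b k - a k) N).
  { apply cond_pos_sum. intro k. specialize (Hab k). lra. }
  lra.
Qed.

Lemma cover_lengths_glb_exists S :
  (exists L, cover_lengths S L) -> exists m, is_glb (cover_lengths S) m.
Proof.
  intros [L0 HL0].
  destruct (completeness (fun y => cover_lengths S (- y))) as [M [HMub HMlub]].
  - exists 0. intros y Hy. apply cover_lengths_nonneg in Hy. lra.
  - exists (- L0). now rewrite Ropp_involutive.
  - exists (- M). split.
    + intros L HL. enough (- L <= M) by lra. apply HMub. now rewrite Ropp_involutive.
    + intros m' Hm'. enough (M <= - m') by lra. apply HMlub.
      intros y Hy. apply Hm' in Hy. lra.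
Qed.

Lemma lebesgue_outer_Finite S m :
  lebesgue_outer S = Finite m -> is_glb (cover_lengths S) m.
Proof.
  unfold lebesgue_outer.
  destruct (excluded_middle_informative _) as [Hex|]; intro H; [|discriminate].
  injection H as <-. apply epsilon_spec, cover_lengths_glb_exists, Hex.
Qed.

Lemma lebesgue_outer_p_infty S :
  lebesgue_outer S = p_infty -> ~ exists L, cover_lengths S L.
Proof.
  unfold lebesgue_outer.
  destruct (excluded_middle_informative _); intro H; [discriminate|assumption].
Qed.

Lemma lebesgue_outer_null_iff S :
  ~ Rbar_lt (Finite 0) (lebesgue_outer S) <->
  forall eps, 0 < eps -> exists L, cover_lengths S L /\ L < eps.
Proof.
  split.
  - intros Hnull eps Heps.
    destruct (lebesgue_outer S) as [m|] eqn:E; cbn in Hnull; [|tauto].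
    apply lebesgue_outer_Finite in E.
    apply NNPP. intro Hno. enough (eps <= m) by lra.
    apply (proj2 E). intros L HL. apply Rnot_lt_le. eauto.
  - intros Hsmall. destruct (lebesgue_outer S) as [m|] eqn:E.
    + apply lebesgue_outer_Finite in E. cbn. intro Hm.
      destruct (Hsmall m Hm) as [L [HL HLm]]. apply (proj1 E) in HL. lra.
    + apply lebesgue_outer_p_infty in E. destruct (Hsmall 1 Rlt_0_1) as [L [HL _]]. eauto.
Qed.

Lemma lebesgue_outer_null_sub_reflect (S T : R -> Prop) sg :
  (forall t, T t -> S t \/ S (sg - t)) ->
  ~ Rbar_lt (Finite 0) (lebesgue_outer S) -> ~ Rbar_lt (Finite 0) (lebesgue_outer T).
Proof.
  intros HT HS. rewrite lebesgue_outer_null_iff in *. intros eps Heps.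
  destruct (HS (eps / 2)) as [L [HL HLeps]]; [lra|].
  exists (L + L). split; [|lra]. exact (cover_lengths_sub_reflect S T sg L HT HL).
Qed.

Theorem mainTheorem16 (x : nat -> R) (I : (nat -> Prop) -> Prop) :
  ell1 x -> maximal_ideal I ->
  (~ meager (achievement x) -> ~ meager (achievement_I x I)) /\
  (Rbar_lt (Finite 0) (lebesgue_outer (achievement x)) ->
   lebesgue_measurable (achievement_I x I) ->
   Rbar_lt (Finite 0) (lebesgue_outer (achievement_I x I))).
Proof.
  intros Hx HI.
  destruct (achievement_sub_achievement_I_reflect x I Hx HI) as [sg Hsub].
  split.
  - intros Hnonmeager Hmeager.
    exact (Hnonmeager (meager_sub_reflect _ _ sg Hsub Hmeager)).
  - intros Hpos _. apply NNPP. intro Hnull.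
    exact (lebesgue_outer_null_sub_reflect _ _ sg Hsub Hnull Hpos).
Qed.
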